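(* Let $n\geq 3$, $0\leq k\leq n$, $0<\delta<\frac13$, $r>0$. Let $\mathbf{X}_k$ be a metric space, $\hat q\in\mathbf X_k$, $(M^n,g)$ a Riemannian manifold, $q\in M^n$, and suppose $\Phi:B_{10r}(0,\hat q)\to B_{10r}(q)$ is a pointed $(\delta r)$-Gromov-Hausdorff approximation, where $B_{10r}(0,\hat q)\subset\mathbb{R}^k\times\mathbf{X}_k$. Then for any $\hat q_1^+,\hat q_1^-\in B_r(\hat q)\subset\mathbf{X}_k$ there exists $\hat q_0\in B_{3r}(\hat q)$ such that $$\Big|d(\hat q_0,\hat q_1^+)-\tfrac12 d(\hat q_1^+,\hat q_1^-)\Big|\leq 8\sqrt\delta\, r\quad\text{and}\quad\Big|d(\hat q_0,\hat q_1^-)-\tfrac12 d(\hat q_1^+,\hat q_1^-)\Big|\leq 8\sqrt\delta\, r,$$ and moreover, if $\sqrt\delta\, r\leq\frac{d(\hat q_1^+,\hat q_1^-)}{100}$, then, with $q_1=\Phi(0,\hat q_0)$, $p_{k+1}^+=\Phi(0,\hat q_1^+)$, $p_{k+1}^-=\Phi(0,\hat q_1^-)$, one has $$d(q_1,p_{k+1}^+)+d(q_1,p_{k+1}^-)-d(p_{k+1}^+,p_{k+1}^-)\leq 16\sqrt\delta\, r\quad\text{and}\quad\min\{d(q_1,p_{k+1}^+),d(q_1,p_{k+1}^-)\}\geq\tfrac14 d(\hat q_1^+,\hat q_1^-).$$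
   Context: $B_\rho(x)$ is the open ball. $\mathbb{R}^k\times\mathbf{X}_k$ has the product metric $\sqrt{|a-b|^2+d_{\mathbf X_k}(x,y)^2}$. A pointed $\eta$-Gromov-Hausdorff approximation $f:(\mathbf{X},x_0)\to(\mathbf{Y},y_0)$ satisfies $f(x_0)=y_0$, every point of $\mathbf Y$ lies within $\eta$ of $f(\mathbf X)$, and $|d(f(x_1),f(x_2))-d(x_1,x_2)|<\eta$ for all $x_1,x_2$; base points here are $(0,\hat q)$ and $q$. *)

From mathcomp Require Import all_boot all_order all_algebra.
From mathcomp Require Import reals.
Set Implicit Arguments. Unset Strict Implicit. Unset Printing Implicit Defensive.
Import Order.TTheory GRing.Theory Num.Theory.
Local Open Scope ring_scope.

Definition is_metric (R : realType) (T : Type) (d : T -> T -> R) : Prop :=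
  [/\ (forall x y, 0 <= d x y),
      (forall x y, d x y = 0 <-> x = y),
      (forall x y, d x y = d y x) &
      (forall x y z, d x z <= d x y + d y z)].

(* Approximate midpoint property: characterizes length (intrinsic) metric
   spaces; the distance of a connected Riemannian manifold has it. *)
Definition approx_midpoints (R : realType) (T : Type) (d : T -> T -> R) : Prop :=
  forall x y (eps : R), 0 < eps ->
    exists z, d x z <= d x y / 2 + eps /\ d z y <= d x y / 2 + eps.

Definition prod_dist (R : realType) (k : nat) (X : Type) (dX : X -> X -> R)
  (p1 p2 : 'rV[R]_k * X) : R :=
  Num.sqrt (\sum_(i < k) (p1.1 0 i - p2.1 0 i) ^+ 2 + (dX p1.2 p2.2) ^+ 2).

Definition in_ball (R : realType) (T : Type) (d : T -> T -> R) (c : T) (rho : R)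
  (x : T) : Prop := d c x < rho.

(* Pointed eta-Gromov-Hausdorff approximation f : (B_rho(x0), x0) -> (B_rho(y0), y0),
   where f is given as a total function whose values outside B_rho(x0) are irrelevant. *)
Definition pointed_GH_approx (R : realType) (A B : Type)
  (dA : A -> A -> R) (dB : B -> B -> R) (x0 : A) (y0 : B) (rho eta : R)
  (f : A -> B) : Prop :=
  [/\ f x0 = y0,
      (forall x, in_ball dA x0 rho x -> in_ball dB y0 rho (f x)),
      (forall y, in_ball dB y0 rho y ->
          exists2 x, in_ball dA x0 rho x & dB y (f x) < eta) &
      (forall x1 x2, in_ball dA x0 rho x1 -> in_ball dA x0 rho x2 ->
          `|dB (f x1) (f x2) - dA x1 x2| < eta)].

(** Pull an approximate midpoint of [Phi (0, q1+)] and [Phi (0, q1-)] in the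
    length space [M] back through the Gromov-Hausdorff approximation: its
    [X]-component [q0] is a [3 delta r]-approximate midpoint of [q1+] and [q1-],
    since the product distance dominates the distance of the [X]-components.
    Pushing [q0] forward again costs one more [delta r] per distance, which gives
    the excess and the lower bound.  When [64 delta >= 1] the bounds exceed the
    diameter of [B_r(qhat)] and [q0 := q1+] works, the last claim being vacuous. *)

From mathcomp Require Import all_boot all_order all_algebra.
From mathcomp Require Import reals.
From mathcomp Require Import lra.
Import Order.TTheory GRing.Theory Num.Theory.
Local Open Scope ring_scope.

Lemma prod_dist_sameE {R : realType} {k : nat} {X : Type} (dX : X -> X -> R)
    (a : 'rV[R]_k) {x y : X} :
  0 <= dX x y -> prod_dist dX (a, x) (a, y) = dX x y.
Proof.
move=> dX_ge0; rewrite /prod_dist /= big1 ?add0r ?sqrtr_sqr ?ger0_norm //.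
by move=> i _; rewrite subrr expr0n.
Qed.

Lemma prod_dist_ge_snd {R : realType} {k : nat} {X : Type} (dX : X -> X -> R)
    (p1 p2 : 'rV[R]_k * X) :
  dX p1.2 p2.2 <= prod_dist dX p1 p2.
Proof.
apply: le_trans (ler_norm _) _; rewrite /prod_dist -sqrtr_sqr ler_sqrt.
  by rewrite lerDr sumr_ge0 // => i _; rewrite sqr_ge0.
by rewrite addr_ge0 ?sqr_ge0 // sumr_ge0 // => i _; rewrite sqr_ge0.
Qed.

Lemma near_midpoint_dist {R : realType} {T : Type} {d : T -> T -> R} {x a b : T} {e : R} :
  is_metric d -> d x a <= d a b / 2 + e -> d x b <= d a b / 2 + e ->
  `|d x a - d a b / 2| <= e.
Proof.
move=> [_ _ d_sym d_tri] xa xb; have := d_tri a x b; rewrite (d_sym a x) => axb.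
by rewrite ler_norml; apply/andP; split; lra.
Qed.

Section GHApproximation.

Context {R : realType} {A B : Type} {dA : A -> A -> R} {dB : B -> B -> R}.
Context {x0 : A} {y0 : B} {rho eta : R} {f : A -> B}.
Hypothesis f_GH : pointed_GH_approx dA dB x0 y0 rho eta f.

Local Notation inA := (in_ball dA x0 rho).

Lemma GH_approx_dist_ub {x1 x2 : A} :
  inA x1 -> inA x2 -> dB (f x1) (f x2) < dA x1 x2 + eta.
Proof.
case: f_GH => _ _ _ f_dist x1_in x2_in.
by have := f_dist _ _ x1_in x2_in; rewrite ltr_norml => /andP[_]; lra.
Qed.

Lemma GH_approx_dist_lb {x1 x2 : A} :
  inA x1 -> inA x2 -> dA x1 x2 < dB (f x1) (f x2) + eta.
Proof.
case: f_GH => _ _ _ f_dist x1_in x2_in.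
by have := f_dist _ _ x1_in x2_in; rewrite ltr_norml => /andP[]; lra.
Qed.

Lemma GH_approx_midpoint {x1 x2 : A} :
  is_metric dB -> approx_midpoints dB -> 0 < eta ->
  inA x0 -> inA x1 -> inA x2 -> dA x0 x1 + dA x1 x2 / 2 + 2 * eta <= rho ->
  exists2 x, inA x &
    dA x x1 < dA x1 x2 / 2 + 3 * eta /\ dA x x2 < dA x1 x2 / 2 + 3 * eta.
Proof.
move=> [_ _ dB_sym dB_tri] dB_mid eta_gt0 x0_in x1_in x2_in x1_near.
have [f0 _ f_onto _] := f_GH.
have f12 := GH_approx_dist_ub x1_in x2_in.
have [z [z1 z2]] := dB_mid (f x1) (f x2) (eta / 2) ltac:(lra).
have z_in : in_ball dB y0 rho z.
  have := GH_approx_dist_ub x0_in x1_in; rewrite f0 /in_ball => f01.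
  by have := dB_tri y0 (f x1) z; lra.
have [x x_in zx] := f_onto z z_in.
exists x => //.
have := GH_approx_dist_lb x_in x1_in; have := GH_approx_dist_lb x_in x2_in.
have := dB_tri (f x) z (f x1); have := dB_tri (f x) z (f x2).
by rewrite (dB_sym (f x) z) (dB_sym z (f x1)); lra.
Qed.

End GHApproximation.

Section Distortion.

Context {R : realType} {A B : Type} {dA : A -> A -> R} {dB : B -> B -> R}.
Context {g : A -> B} {x a b : A} {e eta : R}.
Hypotheses (gxa : `|dB (g x) (g a) - dA x a| < eta) (gxb : `|dB (g x) (g b) - dA x b| < eta).
Hypothesis gab : `|dB (g a) (g b) - dA a b| < eta.
Hypotheses (xa : `|dA x a - dA a b / 2| <= e) (xb : `|dA x b - dA a b / 2| <= e).

Lemma distortion_excess_lt :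
  dB (g x) (g a) + dB (g x) (g b) - dB (g a) (g b) < 2 * e + 3 * eta.
Proof.
move: gxa gxb gab xa xb; rewrite !ltr_norml !ler_norml.
by move=> /andP[_ ?] /andP[_ ?] /andP[? _] /andP[_ ?] /andP[_ ?]; lra.
Qed.

Lemma distortion_min_dist_gt :
  dA a b / 2 - e - eta < Num.min (dB (g x) (g a)) (dB (g x) (g b)).
Proof.
move: gxa gxb xa xb; rewrite !ltr_norml !ler_norml lt_min.
by move=> /andP[? _] /andP[? _] /andP[? _] /andP[? _]; lra.
Qed.

End Distortion.

Section ProductApproximation.

Context {R : realType} {k : nat} {X M : Type} {dX : X -> X -> R} {dM : M -> M -> R}.
Context {qhat : X} {q : M} {r eta : R} {Phi : 'rV[R]_k * X -> M}.
Hypothesis dX_metric : is_metric dX.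
Hypothesis Phi_GH : pointed_GH_approx (prod_dist dX) dM (0, qhat) q (10 * r) eta Phi.

Let dX_ge0 : forall x y, 0 <= dX x y. Proof. by case: dX_metric. Qed.

Let slice_in_ball (x : X) :
  dX qhat x < 10 * r -> in_ball (prod_dist dX) (0 : 'rV[R]_k, qhat) (10 * r) (0, x).
Proof. by rewrite /in_ball prod_dist_sameE. Qed.

Lemma GH_approx_slice_distortion (x y : X) :
  dX qhat x < 10 * r -> dX qhat y < 10 * r ->
  `|dM (Phi (0, x)) (Phi (0, y)) - dX x y| < eta.
Proof.
move=> /slice_in_ball x_in /slice_in_ball y_in; case: Phi_GH => _ _ _ Phi_dist.
by rewrite -(prod_dist_sameE dX (0 : 'rV[R]_k) (dX_ge0 x y)); apply: Phi_dist.
Qed.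

Lemma GH_approx_slice_midpoint {q1p q1m : X} :
  is_metric dM -> approx_midpoints dM -> 0 < eta -> 3 * eta <= r ->
  dX qhat q1p < r -> dX qhat q1m < r ->
  exists q0 : X,
    [/\ dX qhat q0 < 3 * r,
        `|dX q0 q1p - dX q1p q1m / 2| <= 3 * eta &
        `|dX q0 q1m - dX q1p q1m / 2| <= 3 * eta].
Proof.
move=> dM_metric dM_mid eta_gt0 eta_le q1p_near q1m_near.
have [_ dX_eq0 dX_sym dX_tri] := dX_metric.
have D_lt : dX q1p q1m < 2 * r.
  by have := dX_tri q1p qhat q1m; rewrite (dX_sym q1p qhat); lra.
have qhat_in := slice_in_ball qhat ltac:(rewrite (proj2 (dX_eq0 _ _)) //; lra).
have q1p_in := slice_in_ball q1p ltac:(lra).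
have q1m_in := slice_in_ball q1m ltac:(lra).
have [[a q0] _ []] := GH_approx_midpoint Phi_GH dM_metric dM_mid eta_gt0 qhat_in q1p_in q1m_in
  ltac:(rewrite !prod_dist_sameE //; lra).
rewrite !prod_dist_sameE // => q0p q0m.
have := prod_dist_ge_snd dX (a, q0) (0, q1p); have := prod_dist_ge_snd dX (a, q0) (0, q1m).
rewrite /= => q0m' q0p'.
exists q0; split.
- by have := dX_tri qhat q1p q0; rewrite (dX_sym q1p q0); lra.
- by apply: near_midpoint_dist dX_metric _ _; lra.
- rewrite (dX_sym q1p q1m); apply: near_midpoint_dist dX_metric _ _.
  all: by rewrite (dX_sym q1m q1p); lra.
Qed.

End ProductApproximation.

Theorem lemma2p8 (R : realType) (n k : nat) (delta r : R)
  (X : Type) (dX : X -> X -> R) (qhat : X)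
  (M : Type) (dM : M -> M -> R) (q : M)
  (Phi : 'rV[R]_k * X -> M) :
  (3 <= n)%N -> (k <= n)%N ->
  0 < delta -> delta < 3^-1 -> 0 < r ->
  is_metric dX -> is_metric dM -> approx_midpoints dM ->
  pointed_GH_approx (prod_dist dX) dM (0, qhat) q (10 * r) (delta * r) Phi ->
  forall q1p q1m : X, dX qhat q1p < r -> dX qhat q1m < r ->
  exists q0 : X,
    [/\ dX qhat q0 < 3 * r,
        `|dX q0 q1p - dX q1p q1m / 2| <= 8 * Num.sqrt delta * r,
        `|dX q0 q1m - dX q1p q1m / 2| <= 8 * Num.sqrt delta * r &
        (Num.sqrt delta * r <= dX q1p q1m / 100 ->
          let q1 := Phi (0, q0) in
          let pp := Phi (0, q1p) in
          let pm := Phi (0, q1m) in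
          dM q1 pp + dM q1 pm - dM pp pm <= 16 * Num.sqrt delta * r /\
          Num.min (dM q1 pp) (dM q1 pm) >= dX q1p q1m / 4)].
Proof.
move=> _ _ delta_gt0 delta_lt r_gt0 dX_metric dM_metric dM_mid Phi_GH.
move=> q1p q1m q1p_near q1m_near.
have [dX_ge0 dX_eq0 dX_sym dX_tri] := dX_metric.
set s := Num.sqrt delta; set D := dX q1p q1m.
have s_ge0 : 0 <= s := sqrtr_ge0 delta.
have s_sqr : s ^+ 2 = delta by rewrite sqr_sqrtr ?ltW.
have delta_le_s : delta * r <= s * r by rewrite ler_pM2r //; nra.
have D_lt : D < 2 * r by have := dX_tri q1p qhat q1m; rewrite (dX_sym q1p qhat) -/D; lra.
have D_ge0 : 0 <= D := dX_ge0 q1p q1m.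
have [s_large | delta_small] := lerP 1 (64 * delta).
  have r_le : r <= 8 * s * r by apply: ler_peMl; [lra | rewrite -s_sqr in s_large; nra].
  exists q1p; rewrite (proj2 (dX_eq0 _ _) erefl) -/D.
  split; [lra | | | by move=> ?; exfalso; lra];
    by rewrite ler_norml; apply/andP; split; lra.
have [delta_r_gt0 delta_r_lt] : 0 < delta * r /\ 64 * (delta * r) < r by split; nra.
have [q0 [q0_near q0p q0m]] := GH_approx_slice_midpoint dX_metric Phi_GH
  dM_metric dM_mid delta_r_gt0 ltac:(lra) q1p_near q1m_near.
have mid_le : 3 * (delta * r) <= 8 * s * r by lra.
exists q0; split; [done | exact: le_trans q0p mid_le | exact: le_trans q0m mid_le | move=> D_ge /=].
have dist := GH_approx_slice_distortion dX_metric Phi_GH.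
have [q0_in q1p_in q1m_in] :
  [/\ dX qhat q0 < 10 * r, dX qhat q1p < 10 * r & dX qhat q1m < 10 * r] by split; lra.
have gxa := dist _ _ q0_in q1p_in; have gxb := dist _ _ q0_in q1m_in.
have gab := dist _ _ q1p_in q1m_in.
have := distortion_excess_lt (g := fun x => Phi (0, x)) gxa gxb gab q0p q0m.
have := distortion_min_dist_gt (g := fun x => Phi (0, x)) gxa gxb q0p q0m.
by rewrite -/D; lra.
Qed.
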